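(* For every even integer $n\ge 4$ there exist a boolean classifier $\kappa:\{0,1\}^n\to\{0,1\}$ and a point $\mathbf v\in\{0,1\}^n$ such that, for the sample $(\mathbf v,\kappa(\mathbf v))$, there exist an irrelevant feature $i_1\in\mathcal F$ with $\mathrm{Sv}(i_1)\neq 0$ and a relevant feature $i_2\in\mathcal F\setminus\{i_1\}$ with $\mathrm{Sv}(i_2)=0$ (issue I4).
   Context: Let $\mathcal F=\{1,\dots,n\}$. A boolean classifier is a non-constant function $\kappa:\{0,1\}^n\to\{0,1\}$; a sample is a pair $(\mathbf v,c)$ with $\mathbf v\in\{0,1\}^n$ and $c=\kappa(\mathbf v)$. For $\mathcal S\subseteq\mathcal F$ let $\Upsilon(\mathcal S;\mathbf v)=\{\mathbf x\in\{0,1\}^n : x_j=v_j \text{ for all } j\in\mathcal S\}$ and, for any function $g$ on $\{0,1\}^n$, $\mathbf E[g\mid \mathbf x_{\mathcal S}=\mathbf v_{\mathcal S}]=|\Upsilon(\mathcal S;\mathbf v)|^{-1}\sum_{\mathbf x\in\Upsilon(\mathcal S;\mathbf v)}g(\mathbf x)$ (uniform distribution, independent features). The characteristic function is $\upsilon(\mathcal S)=\mathbf E[\kappa\mid\mathbf x_{\mathcal S}=\mathbf v_{\mathcal S}]$, and the SHAP score of feature $i$ is $\mathrm{Sv}(i)=\sum_{\mathcal S\subseteq\mathcal F\setminus\{i\}}\frac{|\mathcal S|!\,(n-|\mathcal S|-1)!}{n!}\big(\upsilon(\mathcal S\cup\{i\})-\upsilon(\mathcal S)\big)$. The similarity predicate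 is $\sigma(\mathbf x)=1$ if $\kappa(\mathbf x)=\kappa(\mathbf v)$ and $0$ otherwise. A set $\mathcal S\subseteq\mathcal F$ is a weak abductive explanation (WAXp) if $\mathbf E[\sigma\mid\mathbf x_{\mathcal S}=\mathbf v_{\mathcal S}]=1$ (i.e. $\kappa(\mathbf x)=\kappa(\mathbf v)$ for all $\mathbf x\in\Upsilon(\mathcal S;\mathbf v)$); an abductive explanation (AXp) is a WAXp $\mathcal S$ such that $\mathcal S\setminus\{t\}$ is not a WAXp for every $t\in\mathcal S$. A feature is relevant if it belongs to at least one AXp, and irrelevant otherwise. *)

From mathcomp Require Import all_boot all_order all_algebra.
Set Implicit Arguments. Unset Strict Implicit. Unset Printing Implicit Defensive.
Import Order.TTheory GRing.Theory Num.Theory.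
Local Open Scope ring_scope.

(* Features F = {1..n} are represented by 'I_n; points of {0,1}^n by finite functions. *)
Definition point (n : nat) := {ffun 'I_n -> bool}.

Definition nonconstant (n : nat) (kappa : point n -> bool) : Prop :=
  exists x y : point n, kappa x <> kappa y.

Definition Ups (n : nat) (S : {set 'I_n}) (v : point n) : {set point n} :=
  [set x : point n | [forall j in S, x j == v j]].

Definition cexp (n : nat) (g : point n -> rat) (S : {set 'I_n}) (v : point n) : rat :=
  (#|Ups S v|%:R)^-1 * \sum_(x in Ups S v) g x.

Definition charf (n : nat) (kappa : point n -> bool) (v : point n)
  (S : {set 'I_n}) : rat := cexp (fun x => (kappa x)%:R) S v.

Definition Sv (n : nat) (kappa : point n -> bool) (v : point n) (i : 'I_n) : rat :=
  \sum_(S : {set 'I_n} | i \notin S)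
     ((#|S| `! * (n - #|S| - 1) `!)%:R / (n `!)%:R) *
     (charf kappa v (i |: S) - charf kappa v S).

Definition sigma (n : nat) (kappa : point n -> bool) (v : point n) (x : point n) : rat :=
  if kappa x == kappa v then 1 else 0.

Definition WAXp (n : nat) (kappa : point n -> bool) (v : point n) (S : {set 'I_n}) : Prop :=
  cexp (sigma kappa v) S v = 1.

Definition AXp (n : nat) (kappa : point n -> bool) (v : point n) (S : {set 'I_n}) : Prop :=
  WAXp kappa v S /\ forall t, t \in S -> ~ WAXp kappa v (S :\ t).

Definition relevant (n : nat) (kappa : point n -> bool) (v : point n) (i : 'I_n) : Prop :=
  exists S : {set 'I_n}, AXp kappa v S /\ i \in S.

Definition irrelevant (n : nat) (kappa : point n -> bool) (v : point n) (i : 'I_n) : Prop :=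
  ~ relevant kappa v i.

From mathcomp Require Import all_boot all_order all_algebra all_fingroup.
From mathcomp Require Import ring lra.
Set Implicit Arguments. Unset Strict Implicit. Unset Printing Implicit Defensive.
Import Order.TTheory GRing.Theory Num.Theory.
Local Open Scope ring_scope.

(* Take n = 4 (padded with dummy features), v = 1 and
     kappa x = (if x2 then x3 else x4) || (x1 && (x3 == x4)).
   A set S is a WAXp iff 3 is in S together with 2 or 4, so the AXps are
   {2,3} and {3,4}: feature 2 is relevant and feature 1 is not.  Flipping x1
   from 1 to 0 can only turn kappa off, and does so at x = (1,0,0,0), so every
   marginal contribution of feature 1 is nonnegative and the one at S = {} is
   positive.  The marginal contribution of feature 2 at S is half of
   E[x3 | x_{S+2} = 1] - E[x4 | x_{S+2} = 1], which changes sign when 3 and 4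
   are swapped in S; hence the Shapley sum of feature 2 cancels. *)

Section ConditionalExpectation.
Variable n : nat.
Implicit Types (S : {set 'I_n}) (v x : point n) (g h : point n -> rat).

Definition flip (i : 'I_n) x : point n :=
  [ffun t => if t == i then ~~ x t else x t].

Lemma flipE i x t : flip i x t = if t == i then ~~ x t else x t.
Proof. by rewrite ffunE. Qed.

Lemma flipK i : involutive (flip i).
Proof. by move=> x; apply/ffunP=> t; rewrite !flipE; case: (t == i); rewrite ?negbK. Qed.

Lemma UpsP S v x : reflect (forall t, t \in S -> x t = v t) (x \in Ups S v).
Proof.
rewrite inE; apply: (iffP forallP) => [agree t tS | agree t].
- by apply/eqP; move: (agree t); rewrite tS.
- by apply/implyP => /agree->.
Qed.

Lemma mem_Ups S v : v \in Ups S v.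
Proof. exact/UpsP. Qed.

Lemma card_Ups_neq0 S v : (#|Ups S v|%:R : rat) != 0.
Proof. by rewrite pnatr_eq0 -lt0n; apply/card_gt0P; exists v; apply: mem_Ups. Qed.

Lemma eq_cexp S v g h : {in Ups S v, g =1 h} -> cexp g S v = cexp h S v.
Proof. by move=> gh; rewrite /cexp (eq_bigr h). Qed.

Lemma cexp_cst S v (c : rat) : cexp (fun=> c) S v = c.
Proof. by rewrite /cexp sumr_const -[c *+ _]mulr_natl mulKf ?card_Ups_neq0. Qed.

Lemma cexpD S v g h : cexp (fun x => g x + h x) S v = cexp g S v + cexp h S v.
Proof. by rewrite /cexp big_split mulrDr. Qed.

Lemma cexpB S v g h : cexp (fun x => g x - h x) S v = cexp g S v - cexp h S v.
Proof. by rewrite /cexp sumrB mulrBr. Qed.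

Lemma cexp_ge0 S v g : {in Ups S v, forall x, 0 <= g x} -> 0 <= cexp g S v.
Proof. by move=> g_ge0; rewrite mulr_ge0 ?invr_ge0 ?ler0n ?sumr_ge0. Qed.

Lemma cexp_gt0 S v g x0 : x0 \in Ups S v -> 0 < g x0 ->
  {in Ups S v, forall x, 0 <= g x} -> 0 < cexp g S v.
Proof.
move=> x0S gx0 g_ge0; apply: mulr_gt0.
  by rewrite invr_gt0 lt0r card_Ups_neq0 /=.
rewrite (bigD1 x0) //= ltr_pwDl // sumr_ge0 // => x /andP[xS _].
exact: g_ge0.
Qed.

(* Points of Ups S v are paired by flipping a free coordinate i, one of each
   pair agreeing with v at i. *)
Lemma sum_Ups_setU1 S v g i : i \notin S ->
  \sum_(x in Ups S v) g x = \sum_(x in Ups (i |: S) v) (g x + g (flip i x)).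
Proof.
move=> iS; have neq_i t : t \in S -> (t == i) = false.
  by move=> tS; apply/eqP => ti; rewrite -ti tS in iS.
rewrite big_split /= (bigID (fun x : point n => x i == v i)) /=.
congr (_ + _).
  apply: eq_bigl => x; apply/andP/UpsP => [[/UpsP xS /eqP xi] t|xSi].
    by rewrite in_setU1 => /predU1P[->|/xS].
  split; last by apply/eqP/xSi; rewrite setU11.
  by apply/UpsP => t tS; apply/xSi; rewrite in_setU1 tS orbT.
rewrite (reindex_inj (can_inj (flipK i))) /=.
apply: eq_bigl => x; rewrite flipE eqxx; apply/andP/UpsP => [[/UpsP xS xi] t|xSi].
  rewrite in_setU1 => /predU1P[->|tS]; first by move: xi; case: (x i); case: (v i).
  by have := xS t tS; rewrite flipE neq_i.
split; last by rewrite xSi ?setU11 //; case: (v i).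
by apply/UpsP => t tS; rewrite flipE neq_i // xSi // in_setU1 tS orbT.
Qed.

Lemma cexp_setU1 S v g i : i \notin S ->
  cexp g S v = cexp (fun x => g x + g (flip i x)) (i |: S) v / 2.
Proof.
move=> iS; have card_S : (#|Ups S v|%:R : rat) = 2 * #|Ups (i |: S) v|%:R.
  have := sum_Ups_setU1 v (fun=> 1) iS.
  by rewrite !sumr_const => ->; rewrite -mulr_natr; ring.
rewrite /cexp card_S (sum_Ups_setU1 v g iS).
have := card_Ups_neq0 (i |: S) v; set c := (#|_|%:R : rat) => c_neq0.
by field; rewrite c_neq0.
Qed.

Lemma cexp_coord_fixed S v t : t \in S -> cexp (fun x => (x t)%:R) S v = (v t)%:R.
Proof. by move=> tS; rewrite (@eq_cexp _ _ _ (fun=> (v t)%:R)) ?cexp_cst // => x /UpsP->. Qed.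

Lemma cexp_coord_free S v t : t \notin S -> cexp (fun x => (x t)%:R) S v = 1 / 2.
Proof.
move=> tS; rewrite (cexp_setU1 _ _ tS) (@eq_cexp _ _ _ (fun=> 1)) ?cexp_cst //.
by move=> x _; rewrite /= flipE eqxx; case: (x t).
Qed.

Lemma WAXpE (kappa : point n -> bool) v S :
  WAXp kappa v S <-> {in Ups S v, forall x, kappa x = kappa v}.
Proof.
rewrite /WAXp; split => [sigma1 x xS | same].
  have cexp_miss0 : cexp (fun y => 1 - sigma kappa v y) S v = 0.
    by rewrite cexpB cexp_cst sigma1 subrr.
  have miss_ge0 y : 0 <= 1 - sigma kappa v y.
    by rewrite /sigma; case: ifP; rewrite ?subrr ?subr0.
  move: cexp_miss0 => /eqP; rewrite /cexp mulf_eq0 invr_eq0 (negbTE (card_Ups_neq0 _ _)).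
  move=> /eqP /(psumr_eq0P (fun y _ => miss_ge0 y)) /(_ x xS).
  by rewrite /sigma; case: eqP => // _ /eqP; rewrite subr0 oner_eq0.
by rewrite (@eq_cexp _ _ _ (fun=> 1)) ?cexp_cst // => x xS; rewrite /sigma same ?eqxx.
Qed.

End ConditionalExpectation.

Section Shapley.
Variables (n : nat) (kappa : point n -> bool) (v : point n) (i : 'I_n).
Implicit Types S : {set 'I_n}.

Definition marginal S : rat := charf kappa v (i |: S) - charf kappa v S.

Lemma marginalE S : i \notin S ->
  marginal S = cexp (fun x => (kappa x)%:R - (kappa (flip i x))%:R) (i |: S) v / 2.
Proof. by move=> iS; rewrite /marginal /charf (cexp_setU1 _ _ iS) cexpD cexpB; field. Qed.

Definition shapley_weight (s : nat) : rat := (s`! * (n - s - 1)`!)%:R / (n`!)%:R.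

Lemma shapley_weight_gt0 s : 0 < shapley_weight s.
Proof. by apply: divr_gt0; rewrite ltr0n ?muln_gt0 !fact_gt0. Qed.

Lemma SvE :
  Sv kappa v i = \sum_(S : {set 'I_n} | i \notin S) shapley_weight #|S| * marginal S.
Proof. by []. Qed.

Lemma Sv_gt0 S0 : i \notin S0 -> 0 < marginal S0 ->
  (forall S, i \notin S -> 0 <= marginal S) -> 0 < Sv kappa v i.
Proof.
move=> iS0 marginal_S0 marginal_ge0; rewrite SvE (bigD1 S0) //=.
apply: ltr_pwDl; first by rewrite mulr_gt0 ?shapley_weight_gt0.
apply: sumr_ge0 => S /andP[iS _].
by rewrite mulr_ge0 ?marginal_ge0 // ltW // shapley_weight_gt0.
Qed.

(* Reindex the Shapley sum along S |-> s @: S, which preserves both i \notin S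
   and #|S|. *)
Lemma Sv_eq0_antisym (s : {perm 'I_n}) : s i = i ->
  (forall S, i \notin S -> marginal (s @: S) = - marginal S) -> Sv kappa v i = 0.
Proof.
move=> si marginal_s.
suff: Sv kappa v i = - Sv kappa v i by lra.
rewrite {1}SvE (reindex_inj (imset_inj (@perm_inj _ s))) /= SvE -sumrN.
have mem_i S : (i \in s @: S) = (i \in S) by rewrite -{1}si mem_imset //; apply: perm_inj.
apply: eq_big => [S | S iS]; first by rewrite mem_i.
rewrite mem_i in iS.
by rewrite card_imset ?marginal_s ?mulrN //; apply: perm_inj.
Qed.

End Shapley.

Section Counterexample.
Variable m : nat.
Local Notation N := m.+4.
Implicit Types S : {set 'I_N}.

Definition i1 : 'I_N := @Ordinal N 0 isT.
Definition i2 : 'I_N := @Ordinal N 1 isT.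
Definition i3 : 'I_N := @Ordinal N 2 isT.
Definition i4 : 'I_N := @Ordinal N 3 isT.

Definition kap (x : point N) : bool :=
  (if x i2 then x i3 else x i4) || (x i1 && (x i3 == x i4)).

Definition ones : point N := [ffun=> true].

Lemma kap_ones : kap ones.
Proof. by rewrite /kap !ffunE. Qed.

Lemma kap_nonconstant : nonconstant kap.
Proof. by exists ones, [ffun=> false]; rewrite kap_ones /kap !ffunE. Qed.

Lemma kap_WAXp S : WAXp kap ones S <-> (i3 \in S) && ((i2 \in S) || (i4 \in S)).
Proof.
rewrite WAXpE kap_ones; split => [same | /andP[i3S i2_or_i4S] x /UpsP xS].
  have i3S : i3 \in S.
    apply: contraT => i3S; pose x : point N := [ffun t => t != i3].
    have xS : x \in Ups S ones.
      by apply/UpsP => t tS; rewrite !ffunE; apply: contraNneq i3S => <-.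
    by have := same x xS; rewrite /kap !ffunE.
  rewrite i3S; apply: contraT; rewrite negb_or => /andP[i2S i4S].
  pose x : point N := [ffun t => (t != i2) && (t != i4)].
  have xS : x \in Ups S ones.
    apply/UpsP => t tS; rewrite !ffunE.
    by apply/andP; split; [apply: contraNneq i2S | apply: contraNneq i4S] => <-.
  by have := same x xS; rewrite /kap !ffunE.
rewrite /kap (xS i3) // !ffunE.
by case/orP: i2_or_i4S => [/xS->|/xS->]; rewrite ?ffunE //; case: (x i2).
Qed.

Lemma relevant_i2 : relevant kap ones i2.
Proof.
exists [set i2; i3]; split; last by rewrite !inE eqxx.
split; first by apply/kap_WAXp; rewrite !inE.
by move=> t; rewrite !inE => /orP[] /eqP-> /kap_WAXp; rewrite !inE.
Qed.

(* Every WAXp stays a WAXp after removing i1, so no AXp contains i1. *)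
Lemma irrelevant_i1 : irrelevant kap ones i1.
Proof.
move=> [S [[/kap_WAXp S_WAXp minimal] i1S]]; apply: (minimal i1 i1S).
apply/kap_WAXp; rewrite !in_setD1.
by case/andP: S_WAXp => -> /orP[]->; rewrite ?orbT.
Qed.

Lemma kap_flip_i1_ge0 (x : point N) : x i1 ->
  0 <= ((kap x)%:R - (kap (flip i1 x))%:R : rat).
Proof.
rewrite /kap !flipE /= => ->.
by case: (x i2); case: (x i3); case: (x i4); rewrite /= ?subrr ?subr0.
Qed.

Lemma marginal_i1_ge0 S : i1 \notin S -> 0 <= marginal kap ones i1 S.
Proof.
move=> i1S; rewrite marginalE // divr_ge0 // cexp_ge0 // => x /UpsP xS.
by rewrite kap_flip_i1_ge0 // xS ?setU11 // ffunE.
Qed.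

Lemma marginal_i1_set0 : 0 < marginal kap ones i1 set0.
Proof.
rewrite marginalE ?inE // divr_gt0 //.
apply: (@cexp_gt0 _ _ _ _ [ffun t => t == i1]).
- by apply/UpsP => t; rewrite !inE orbF => /eqP->; rewrite !ffunE.
- by rewrite /kap !flipE !ffunE.
by move=> x /UpsP xS; rewrite kap_flip_i1_ge0 // xS ?setU11 // ffunE.
Qed.

Lemma Sv_i1_neq0 : Sv kap ones i1 != 0.
Proof. by rewrite gt_eqF // (Sv_gt0 _ marginal_i1_set0) ?inE //; apply: marginal_i1_ge0. Qed.

Definition coord_mean (b : bool) : rat := if b then 1 else 1 / 2.

Lemma marginal_i2 S : i2 \notin S ->
  marginal kap ones i2 S = (coord_mean (i3 \in S) - coord_mean (i4 \in S)) / 2.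
Proof.
move=> i2S; rewrite marginalE //.
rewrite (@eq_cexp _ _ _ _ (fun x => (x i3)%:R - (x i4)%:R)); last first.
  move=> x /UpsP xS; rewrite /kap !flipE /= xS ?setU11 // ffunE.
  by case: (x i1); case: (x i3); case: (x i4); rewrite /= ?subrr ?subr0.
have coord t : t != i2 -> cexp (fun x => (x t)%:R) (i2 |: S) ones =
                          coord_mean (t \in S).
  move=> ti2; rewrite /coord_mean; case: ifP => tS.
    by rewrite cexp_coord_fixed ?ffunE // in_setU1 tS orbT.
  by rewrite cexp_coord_free // in_setU1 negb_or ti2 tS.
by rewrite cexpB !coord.
Qed.

Lemma Sv_i2_eq0 : Sv kap ones i2 = 0.
Proof.
apply: (@Sv_eq0_antisym _ _ _ _ (tperm i3 i4)); first by rewrite tpermD.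
move=> S i2S; have swap34 t : (tperm i3 i4 t \in tperm i3 i4 @: S) = (t \in S).
  by rewrite mem_imset //; apply: perm_inj.
rewrite !marginal_i2 //; last by rewrite -[i2](@tpermD _ i3 i4) // swap34.
have -> : (i3 \in tperm i3 i4 @: S) = (i4 \in S) by rewrite -swap34 tpermR.
have -> : (i4 \in tperm i3 i4 @: S) = (i3 \in S) by rewrite -swap34 tpermL.
by rewrite -mulNr opprB.
Qed.

End Counterexample.

Theorem proposition3 (n : nat) (hn : (4 <= n)%N) (heven : ~~ odd n) :
  exists (kappa : point n -> bool) (v : point n),
    nonconstant kappa /\
    exists i1 i2 : 'I_n,
      [/\ irrelevant kappa v i1, Sv kappa v i1 != 0,
          i2 != i1, relevant kappa v i2 & Sv kappa v i2 = 0].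
Proof.
case: n hn heven => [|[|[|[|m]]]] // _ _.
exists (@kap m), (@ones m); split; first exact: kap_nonconstant.
exists (@i1 m), (@i2 m); split => //.
- exact: irrelevant_i1.
- exact: Sv_i1_neq0.
- exact: relevant_i2.
- exact: Sv_i2_eq0.
Qed.
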